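(* Let $G=(V,\pi)$ be a two-player game with two questions per player ($\{A,A'\}$ for Alice, $\{B,B'\}$ for Bob) and finite answer sets. If $\pi(X,Y)=0$ for some question pair $(X,Y)$, then $\omega^*(G)=\omega(G)$.
   Context: $\omega(G)$ is the classical value: the supremum of $\sum_{x,y}\pi(x,y)V(\alpha(x),\beta(y)|x,y)$ over functions $\alpha,\beta$ from questions to answers. $\omega^*(G)$ is the entangled value: the supremum, over finite-dimensional states $|\psi\rangle\in\mathbb{C}^{d_A}\otimes\mathbb{C}^{d_B}$ and POVMs $\{A^x_a\}_a,\{B^y_b\}_b$, of $\sum_{x,y}\pi(x,y)\sum_{a,b}V(a,b|x,y)\langle\psi|A^x_a\otimes B^y_b|\psi\rangle$. *)

From HB Require Import structures.
From mathcomp Require Import all_boot all_order all_algebra.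
Set Implicit Arguments. Unset Strict Implicit. Unset Printing Implicit Defensive.
Import Order.TTheory GRing.Theory Num.Theory.
Local Open Scope ring_scope.

(* Scalars: an arbitrary numClosedFieldType R (e.g. the complex numbers).
   Questions: bool for each player (false = A resp. B, true = A' resp. B').
   A game is given by a question distribution pi : bool -> bool -> R and a
   predicate V : SA -> SB -> bool -> bool -> bool  (V a b x y = "win"). *)

Definition is_distribution (R : numClosedFieldType) (pi : bool -> bool -> R) :=
  (forall x y, 0 <= pi x y) /\ \sum_(x : bool) \sum_(y : bool) pi x y = 1.

Definition cval (R : numClosedFieldType) (SA SB : finType)
  (pi : bool -> bool -> R) (V : SA -> SB -> bool -> bool -> bool)
  (alpha : {ffun bool -> SA}) (beta : {ffun bool -> SB}) : R :=
  \sum_(x : bool) \sum_(y : bool) pi x y * (V (alpha x) (beta y) x y)%:R.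

(* omega(G): the maximum (= supremum, finitely many strategies) of the
   classical values; the answer sets are assumed nonempty in the theorem. *)
Definition omega (R : numClosedFieldType) (SA SB : finType)
  (pi : bool -> bool -> R) (V : SA -> SB -> bool -> bool -> bool) : R :=
  \big[Num.max/0]_(alpha : {ffun bool -> SA})
    \big[Num.max/0]_(beta : {ffun bool -> SB}) cval pi V alpha beta.

Definition psd (R : numClosedFieldType) (n : nat) (M : 'M[R]_n) :=
  forall v : 'cV[R]_n, 0 <= \sum_(i < n) \sum_(j < n) (v i 0)^* * M i j * v j 0.

Definition is_povm (R : numClosedFieldType) (S : finType) (n : nat)
  (P : bool -> S -> 'M[R]_n) :=
  (forall x a, psd (P x a)) /\ (forall x, \sum_(a : S) P x a = 1%:M).

(* A unit vector |psi> in C^dA (x) C^dB, represented by its coefficient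
   matrix: |psi> = sum_{i,k} psi i k |i>|k>. *)
Definition is_state (R : numClosedFieldType) (dA dB : nat) (psi : 'M[R]_(dA, dB)) :=
  \sum_(i < dA) \sum_(k < dB) `|psi i k| ^+ 2 = 1.

(* <psi| P (x) Q |psi>, written out in coordinates. *)
Definition qcorr (R : numClosedFieldType) (dA dB : nat) (psi : 'M[R]_(dA, dB))
  (P : 'M[R]_dA) (Q : 'M[R]_dB) : R :=
  \sum_(i < dA) \sum_(j < dA) \sum_(k < dB) \sum_(l < dB)
     (psi i k)^* * P i j * Q k l * psi j l.

Definition qval (R : numClosedFieldType) (SA SB : finType)
  (pi : bool -> bool -> R) (V : SA -> SB -> bool -> bool -> bool)
  (dA dB : nat) (psi : 'M[R]_(dA, dB))
  (PA : bool -> SA -> 'M[R]_dA) (PB : bool -> SB -> 'M[R]_dB) : R :=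
  \sum_(x : bool) \sum_(y : bool) pi x y *
    \sum_(a : SA) \sum_(b : SB) (V a b x y)%:R * qcorr psi (PA x a) (PB y b).

Definition quantum_values (R : numClosedFieldType) (SA SB : finType)
  (pi : bool -> bool -> R) (V : SA -> SB -> bool -> bool -> bool) (v : R) : Prop :=
  exists (dA dB : nat) (psi : 'M[R]_(dA, dB))
         (PA : bool -> SA -> 'M[R]_dA) (PB : bool -> SB -> 'M[R]_dB),
    [/\ is_state psi, is_povm PA, is_povm PB & v = qval pi V psi PA PB].

Definition is_sup (R : numClosedFieldType) (S : R -> Prop) (s : R) : Prop :=
  (forall v, S v -> v <= s) /\ (forall u, (forall v, S v -> v <= u) -> s <= u).

(* omega*(G) = omega(G), i.e. omega(G) is the supremum of the entangled values. *)
Definition omega_star_eq_omega (R : numClosedFieldType) (SA SB : finType)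
  (pi : bool -> bool -> R) (V : SA -> SB -> bool -> bool -> bool) : Prop :=
  is_sup (quantum_values pi V) (omega pi V).

From HB Require Import structures.
From mathcomp Require Import all_boot all_order all_algebra.
From mathcomp Require Import ring.
Import Order.TTheory GRing.Theory Num.Theory.
Set Implicit Arguments. Unset Strict Implicit. Unset Printing Implicit Defensive.
Local Open Scope ring_scope.

(* The entangled strategy (psi, A, B) induces the correlation
   q x y a b = <psi| A^x_a (x) B^y_b |psi>, which is nonnegative, normalized
   and no-signaling (each player's marginal ignores the other's question).
   If pi X Y = 0, the value of any such correlation is an average, with the
   weights q (~X) (~Y) a b, of the values of deterministic strategies: answer
   a, b on the pair (~X, ~Y) and play best responses on the mixed pairs
   (X, ~Y) and (~X, Y); the no-signaling conditions move each mixed pair onto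
   the weights of (~X, ~Y).  Hence every entangled value is <= omega, while
   omega itself is the value of a deterministic, hence entangled, strategy. *)

Section PsdForms.
Variables (R : numClosedFieldType) (n : nat).
Implicit Types (Q N : 'M[R]_n) (u w : 'I_n -> R).

Definition form Q u w : R := \sum_i \sum_j (u i)^* * Q i j * w j.

Definition psd_fun Q := forall f : 'I_n -> R, 0 <= form Q f f.

Definition basis_vec (m : 'I_n) : 'I_n -> R := fun j => (j == m)%:R.

Lemma psd_psd_fun Q : psd Q -> psd_fun Q.
Proof.
move=> HQ f; have := HQ (\col_i f i); rewrite /form.
by under eq_bigr do under eq_bigr do rewrite !mxE.
Qed.

Lemma sum_basis_vecr (m : 'I_n) (F : 'I_n -> R) :
  \sum_j F j * basis_vec m j = F m.
Proof.
rewrite (bigD1 m) //= /basis_vec eqxx mulr1 big1 ?addr0 // => j /negbTE ->.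
by rewrite mulr0.
Qed.

Lemma sum_basis_vecl (m : 'I_n) (F : 'I_n -> R) :
  \sum_j (basis_vec m j)^* * F j = F m.
Proof.
rewrite (bigD1 m) //= /basis_vec eqxx rmorph1 mul1r big1 ?addr0 // => j /negbTE ->.
by rewrite rmorph0 mul0r.
Qed.

Lemma form_basisl Q m w : form Q (basis_vec m) w = \sum_j Q m j * w j.
Proof.
rewrite /form -(sum_basis_vecl m (fun i => \sum_j Q i j * w j)).
apply: eq_bigr => i _; rewrite mulr_sumr.
by apply: eq_bigr => j _; rewrite mulrA.
Qed.

Lemma form_basisr Q u m : form Q u (basis_vec m) = \sum_i (u i)^* * Q i m.
Proof. by apply: eq_bigr => i _; rewrite sum_basis_vecr. Qed.

Lemma form_basis Q k l : form Q (basis_vec k) (basis_vec l) = Q k l.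
Proof. by rewrite form_basisl sum_basis_vecr. Qed.

Lemma form_line Q u d (t : R) :
  form Q (fun i => u i + t * d i) (fun i => u i + t * d i) =
  form Q u u + t * form Q u d + t^* * form Q d u + t * t^* * form Q d d.
Proof.
rewrite /form !mulr_sumr -!big_split; apply: eq_bigr => i _.
rewrite !mulr_sumr -!big_split; apply: eq_bigr => j _ /=.
rewrite rmorphD rmorphM /=; ring.
Qed.

Lemma psd_diag_ge0 Q k : psd_fun Q -> 0 <= Q k k.
Proof. by move=> /(_ (basis_vec k)); rewrite form_basis. Qed.

Lemma conj_ge0 (x : R) : 0 <= x -> x^* = x.
Proof. by move=> x0; apply/conj_Creal/ger0_real. Qed.

(* A positive semidefinite matrix is Hermitian: polarize the (real) values of
   the form along the vectors e_k + e_l and e_k + i e_l. *)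
Lemma psd_hermitian Q k l : psd_fun Q -> Q l k = (Q k l)^*.
Proof.
move=> HQ; set a := Q k l; set b := Q l k.
have pair_real t : t^* * a^* + t * b^* = t * a + t^* * b.
  have := conj_ge0 (HQ (fun i => basis_vec k i + t * basis_vec l i)).
  rewrite form_line !form_basis -/a -/b !rmorphD !rmorphM /= (conjCK t).
  rewrite (conj_ge0 (psd_diag_ge0 k HQ)) (conj_ge0 (psd_diag_ge0 l HQ)).
  by rewrite [t^* * t]mulrC -!addrA => /addrI; rewrite !addrA => /addIr.
have e1 := pair_real 1; have e2 := pair_real 'i.
rewrite rmorph1 !mul1r in e1; rewrite conjCi in e2.
have e3 : b^* - a^* = a - b.
  have i_nz : 'i != 0 :> R by rewrite neq0Ci.
  apply: (mulfI i_nz); transitivity (- 'i * a^* + 'i * b^*); first ring.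
  by rewrite e2; ring.
have two_nz : (2%:R : R) != 0 by rewrite pnatr_eq0.
have : 2%:R * b^* = 2%:R * a.
  transitivity ((a^* + b^*) + (b^* - a^*)); first ring.
  by rewrite e1 e3; ring.
by move/(mulfI two_nz) <-; rewrite conjCK.
Qed.

(* A zero diagonal entry of a psd matrix forces its whole row to vanish:
   otherwise the form is negative at e_l - c s e_m for a large real c. *)
Lemma psd_zero_row Q m l : psd_fun Q -> Q m m = 0 -> Q m l = 0.
Proof.
move=> HQ qz; apply/eqP; apply: contraT; set s := Q m l => s_nz.
have ss_gt0 : 0 < s * s^* by rewrite mul_conjC_gt0.
have ll_ge0 := psd_diag_ge0 l HQ.
set c := (Q l l + 1) / (s * s^*).
have cc : c^* = c by apply/conj_ge0; rewrite divr_ge0 ?addr_ge0 // ltW.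
have := HQ (fun i => basis_vec l i + (- (c * s)) * basis_vec m i).
rewrite form_line !form_basis qz (psd_hermitian m l HQ) -/s rmorphN rmorphM /= cc.
have -> : Q l l + - (c * s) * s^* + - (c * s^*) * s + - (c * s) * - (c * s^*) * 0
   = - (Q l l + 2%:R).
  by rewrite /c; field; rewrite conjC_eq0 s_nz.
have : - (Q l l + 2%:R) < 0 by rewrite oppr_lt0 ltr_wpDl.
by move/lt_geF ->.
Qed.

Definition schur Q m : 'M[R]_n := \matrix_(k, l) (Q k l - Q k m * Q m l / Q m m).

(* The Schur complement of a psd matrix is psd: its form at v equals the form
   of Q at v - (Q m . v / Q m m) e_m. *)
Lemma schur_psd Q m : psd_fun Q -> Q m m != 0 -> psd_fun (schur Q m).
Proof.
move=> HQ q_nz v; set q := Q m m in q_nz *.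
set s2 := \sum_j Q m j * v j; set s1 := \sum_i (v i)^* * Q i m.
have qinv_c : (q^-1)^* = q^-1 by apply/conj_ge0; rewrite invr_ge0 psd_diag_ge0.
have -> : form (schur Q m) v v = form Q v v - s1 * s2 / q.
  rewrite /form /s1 -mulrA mulr_suml -sumrB; apply: eq_bigr => i _.
  rewrite /s2 mulr_suml mulr_sumr -sumrB; apply: eq_bigr => j _.
  by rewrite mxE -/q; field.
have := HQ (fun i => v i + (- (s2 * q^-1)) * basis_vec m i).
rewrite form_line form_basisl form_basisr form_basis -/s1 -/s2 -/q.
rewrite rmorphN rmorphM /= qinv_c.
by rewrite (_ : form Q v v + - (s2 * q^-1) * s1 + - (s2^* * q^-1) * s2
   + - (s2 * q^-1) * - (s2^* * q^-1) * q = form Q v v - s1 * s2 / q) //; field.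
Qed.

Definition frob N Q : R := \sum_k \sum_l N k l * Q k l.

Lemma frob_schur N Q m : psd_fun Q -> Q m m != 0 ->
  frob N Q = frob N (schur Q m) + (Q m m)^-1 * form N (fun k => Q m k) (fun k => Q m k).
Proof.
move=> HQ q_nz; rewrite /form mulr_sumr -big_split; apply: eq_bigr => k _.
rewrite mulr_sumr -big_split; apply: eq_bigr => l _ /=.
by rewrite mxE -psd_hermitian //; field.
Qed.

Definition supported Q (T : {set 'I_n}) :=
  forall k l, Q k l != 0 -> (k \in T) && (l \in T).

Lemma schur_supported Q T m :
  Q m m != 0 -> supported Q T -> supported (schur Q m) (T :\ m).
Proof.
move=> q_nz supp k l; rewrite mxE => h; rewrite !inE.
have out_zero i j : (i \notin T) || (j \notin T) -> Q i j = 0.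
  by move=> ij; apply/eqP; apply: contraTT ij => /supp /andP [-> ->].
apply/andP; split; apply/andP; split.
- by apply: contraNneq h => ->; rewrite mulrAC divff // mul1r subrr.
- apply: contraTT h => hk.
  by rewrite (out_zero k l) ?(out_zero k m) ?hk // !mul0r subrr eqxx.
- by apply: contraNneq h => ->; rewrite -mulrA divff // mulr1 subrr.
- apply: contraTT h => hl.
  by rewrite (out_zero k l) ?(out_zero m l) ?hl ?orbT // mulr0 !mul0r subrr eqxx.
Qed.

Lemma zero_diag_supported Q T m : psd_fun Q -> Q m m = 0 ->
  supported Q T -> supported Q (T :\ m).
Proof.
move=> HQ qz supp k l h; have /andP [hk hl] := supp _ _ h.
rewrite !inE hk hl !andbT; apply/andP; split.
  by apply: contraNneq h => ->; rewrite psd_zero_row.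
by apply: contraNneq h => ->; rewrite psd_hermitian // psd_zero_row // rmorph0.
Qed.

(* Induction on the size of the support: peel off one index at a time. *)
Lemma frob_ge0_supported N r : psd_fun N -> forall (T : {set 'I_n}) Q,
  #|T| = r -> supported Q T -> psd_fun Q -> 0 <= frob N Q.
Proof.
move=> HN; elim: r => [|r IH] T Q cardT supp HQ.
  have T0 : T = set0 by apply/eqP; rewrite -cards_eq0 cardT.
  rewrite /frob big1 // => k _; rewrite big1 // => l _.
  have -> : Q k l = 0 by apply/eqP; apply: contraT => /supp; rewrite T0 inE.
  by rewrite mulr0.
have [m mT] : exists m, m \in T by apply/card_gt0P; rewrite cardT.
have cardTm : #|T :\ m| = r by move: cardT; rewrite (cardsD1 m) mT add1n => -[].
have [qz|q_nz] := eqVneq (Q m m) 0.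
  exact: IH cardTm (zero_diag_supported HQ qz supp) HQ.
rewrite (frob_schur N HQ q_nz); apply: addr_ge0.
  exact: IH cardTm (schur_supported q_nz supp) (schur_psd HQ q_nz).
by apply: mulr_ge0; [rewrite invr_ge0 psd_diag_ge0 | exact: HN].
Qed.

Lemma frob_psd_ge0 N Q : psd_fun N -> psd_fun Q -> 0 <= frob N Q.
Proof.
move=> HN; apply: (frob_ge0_supported HN (erefl #|[set: 'I_n]|)) => k l _.
by rewrite !inE.
Qed.

Lemma frob_sumr (S : finType) N (F : S -> 'M[R]_n) :
  \sum_a frob N (F a) = frob N (\sum_a F a).
Proof.
rewrite exchange_big; apply: eq_bigr => k _; rewrite exchange_big.
by apply: eq_bigr => l _; rewrite summxE mulr_sumr.
Qed.

Lemma frob_suml (S : finType) Q (F : S -> 'M[R]_n) :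
  \sum_a frob (F a) Q = frob (\sum_a F a) Q.
Proof.
rewrite exchange_big; apply: eq_bigr => k _; rewrite exchange_big.
by apply: eq_bigr => l _; rewrite summxE mulr_suml.
Qed.

End PsdForms.

Lemma sum4_swap (R : nmodType) (m n : nat) (F : 'I_m -> 'I_m -> 'I_n -> 'I_n -> R) :
  \sum_i \sum_j \sum_k \sum_l F i j k l = \sum_k \sum_l \sum_i \sum_j F i j k l.
Proof.
under eq_bigr do rewrite exchange_big.
rewrite exchange_big; apply: eq_bigr => k _.
under eq_bigr do rewrite exchange_big.
by rewrite exchange_big.
Qed.

Section Correlations.
Variables (R : numClosedFieldType) (dA dB : nat) (psi : 'M[R]_(dA, dB)).

Definition bob_reduced (P : 'M[R]_dA) : 'M[R]_dB :=
  \matrix_(k, l) \sum_i \sum_j (psi i k)^* * P i j * psi j l.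

Definition alice_reduced (Q : 'M[R]_dB) : 'M[R]_dA :=
  \matrix_(i, j) \sum_k \sum_l (psi i k)^* * Q k l * psi j l.

Lemma qcorr_bob P Q : qcorr psi P Q = frob (bob_reduced P) Q.
Proof.
rewrite /qcorr /frob sum4_swap; apply: eq_bigr => k _; apply: eq_bigr => l _.
rewrite mxE mulr_suml; apply: eq_bigr => i _; rewrite mulr_suml.
by apply: eq_bigr => j _; ring.
Qed.

Lemma qcorr_alice P Q : qcorr psi P Q = frob P (alice_reduced Q).
Proof.
apply: eq_bigr => i _; apply: eq_bigr => j _; rewrite mxE mulr_sumr.
by apply: eq_bigr => k _; rewrite mulr_sumr; apply: eq_bigr => l _; ring.
Qed.

(* Contracting with the state preserves positivity: the form of
   bob_reduced P at v is the form of P at the vector psi v. *)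
Lemma bob_reduced_psd P : psd_fun P -> psd_fun (bob_reduced P).
Proof.
move=> HP v; pose w i := \sum_k psi i k * v k.
suff -> : form (bob_reduced P) v v = form P w w by exact: HP.
rewrite /form /w; transitivity (\sum_i \sum_j \sum_k \sum_l
   (v k)^* * (psi i k)^* * P i j * psi j l * v l); last first.
  apply: eq_bigr => i _; apply: eq_bigr => j _.
  rewrite rmorph_sum !mulr_suml; apply: eq_bigr => k _.
  by rewrite mulr_sumr; apply: eq_bigr => l _; rewrite rmorphM /=; ring.
rewrite sum4_swap; apply: eq_bigr => k _; apply: eq_bigr => l _.
rewrite mxE mulr_sumr mulr_suml; apply: eq_bigr => i _.
by rewrite mulr_sumr mulr_suml; apply: eq_bigr => j _; ring.
Qed.

Lemma qcorr_ge0 P Q : psd P -> psd Q -> 0 <= qcorr psi P Q.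
Proof.
move=> HP HQ; rewrite qcorr_bob.
by apply: frob_psd_ge0; [apply/bob_reduced_psd/psd_psd_fun | apply: psd_psd_fun].
Qed.

Lemma qcorr_sumr (S : finType) P (F : S -> 'M[R]_dB) :
  \sum_b qcorr psi P (F b) = qcorr psi P (\sum_b F b).
Proof. by under eq_bigr do rewrite qcorr_bob; rewrite qcorr_bob frob_sumr. Qed.

Lemma qcorr_suml (S : finType) (F : S -> 'M[R]_dA) Q :
  \sum_a qcorr psi (F a) Q = qcorr psi (\sum_a F a) Q.
Proof. by under eq_bigr do rewrite qcorr_alice; rewrite qcorr_alice frob_suml. Qed.

Lemma qcorr_id : is_state psi -> qcorr psi 1%:M 1%:M = 1.
Proof.
move=> Hs; rewrite qcorr_alice -[RHS]Hs; apply: eq_bigr => i _.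
rewrite (bigD1 i) //= big1 => [|j ji]; last by rewrite mxE eq_sym (negbTE ji) mul0r.
rewrite !mxE eqxx mul1r addr0; apply: eq_bigr => k _.
rewrite (bigD1 k) //= big1 => [|l lk]; last by rewrite mxE eq_sym (negbTE lk) mulr0 mul0r.
by rewrite mxE eqxx mulr1 addr0 normCK mulrC.
Qed.

End Correlations.

Section ClassicalValue.
Variable R : numClosedFieldType.

(* On nonnegative (hence comparable) values Num.max is an upper bound
   attained by one of its arguments. *)
Lemma max_nonneg (x y : R) : 0 <= x -> 0 <= y ->
  [/\ x <= Num.max x y, y <= Num.max x y & Num.max x y = x \/ Num.max x y = y].
Proof.
move=> x0 y0; have [xy|yx] := real_leP (ger0_real x0) (ger0_real y0).
  by split => //; right.
by split => //; [exact: ltW | left].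
Qed.

Lemma bigmax_nonneg (I : eqType) (s : seq I) (F : I -> R) :
  (forall i, 0 <= F i) ->
  let M := \big[Num.max/0]_(i <- s) F i in
  [/\ 0 <= M, (forall i, i \in s -> F i <= M) & M = 0 \/ exists i, M = F i].
Proof.
move=> F_ge0; elim: s => [|x s [M_ge0 M_ub M_val]] /=.
  by rewrite big_nil; split => //; left.
rewrite big_cons; have [x_le s_le max_val] := max_nonneg (F_ge0 x) M_ge0.
split; first exact: le_trans (F_ge0 x) x_le.
  by move=> i; rewrite inE => /predU1P [-> //|/M_ub/le_trans]; apply.
by case: max_val => ->; [right; exists x | exact: M_val].
Qed.

Lemma bigmax_max (I : finType) (i0 : I) (F : I -> R) :
  (forall i, 0 <= F i) ->
  (forall i, F i <= \big[Num.max/0]_i F i) /\ exists i, \big[Num.max/0]_i F i = F i.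
Proof.
move=> F_ge0; have [M_ge0 M_ub M_val] := bigmax_nonneg (index_enum I) F_ge0.
have ub i : F i <= \big[Num.max/0]_i F i by apply: M_ub; rewrite mem_index_enum.
split=> //; case: M_val => [M0|//]; exists i0.
by apply: le_anti; rewrite ub M0 F_ge0.
Qed.

Variables (SA SB : finType) (pi : bool -> bool -> R) (V : SA -> SB -> bool -> bool -> bool).
Hypothesis pi_ge0 : forall x y, 0 <= pi x y.

Lemma cval_ge0 alpha beta : 0 <= cval pi V alpha beta.
Proof.
apply: sumr_ge0 => x _; apply: sumr_ge0 => y _.
by apply: mulr_ge0 => //; rewrite ler0n.
Qed.

Lemma omega_max alpha beta :
  cval pi V alpha beta <= omega pi V /\
  exists alpha' beta', omega pi V = cval pi V alpha' beta'.
Proof.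
have inner a := bigmax_max beta (fun b => cval_ge0 a b).
have inner_ge0 a : 0 <= \big[Num.max/0]_b cval pi V a b.
  exact: le_trans (cval_ge0 a beta) ((inner a).1 beta).
have [outer_ub [a' outer_val]] := bigmax_max alpha inner_ge0.
split; first exact: le_trans ((inner alpha).1 beta) (outer_ub alpha).
by have [_ [b' inner_val]] := inner a'; exists a', b'; rewrite /omega outer_val.
Qed.

End ClassicalValue.

Section NonSignaling.
Variables (R : numClosedFieldType) (SA SB : finType) (a0 : SA) (b0 : SB).
Variables (pi : bool -> bool -> R) (V : SA -> SB -> bool -> bool -> bool).
Hypothesis pi_ge0 : forall x y, 0 <= pi x y.

(* A correlation q x y a b = Pr[answers a, b | questions x, y]. *)
Variable q : bool -> bool -> SA -> SB -> R.
Hypothesis q_ge0 : forall x y a b, 0 <= q x y a b.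
Hypothesis q_normalized : forall x y, \sum_a \sum_b q x y a b = 1.
Hypothesis alice_marginal : forall x y y' a, \sum_b q x y a b = \sum_b q x y' a b.
Hypothesis bob_marginal : forall x x' y b, \sum_a q x y a b = \sum_a q x' y a b.

Definition pair_value (x y : bool) : R := \sum_a \sum_b (V a b x y)%:R * q x y a b.

Definition corr_value : R := \sum_x \sum_y pi x y * pair_value x y.

Definition best_alice x y b : SA := odflt a0 [pick a | V a b x y].
Definition best_bob x y a : SB := odflt b0 [pick b | V a b x y].

Lemma win_le (c d : bool) : (c -> d) -> (c%:R : R) <= d%:R.
Proof. by case: c; case: d => // /(_ isT). Qed.

Lemma best_aliceP x y a b : (V a b x y)%:R <= (V (best_alice x y b) b x y)%:R :> R.
Proof.
by apply: win_le => win; rewrite /best_alice; case: pickP => [a' -> // | /(_ a)]; rewrite win.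
Qed.

Lemma best_bobP x y a b : (V a b x y)%:R <= (V a (best_bob x y a) x y)%:R :> R.
Proof.
by apply: win_le => win; rewrite /best_bob; case: pickP => [b' -> // | /(_ b)]; rewrite win.
Qed.

(* Replacing Alice's answer by her best response to b only depends on Bob's
   marginal, which is the same for every question x' of Alice. *)
Lemma pair_value_le_alice x x' y :
  pair_value x y <= \sum_a \sum_b q x' y a b * (V (best_alice x y b) b x y)%:R.
Proof.
apply: (@le_trans _ _ (\sum_a \sum_b (V (best_alice x y b) b x y)%:R * q x y a b)).
  by apply: ler_sum => a _; apply: ler_sum => b _; rewrite ler_wpM2r ?best_aliceP.
rewrite exchange_big [leRHS]exchange_big; apply: ler_sum => b _ /=.
rewrite -mulr_sumr (bob_marginal x x') mulr_sumr.
by apply: ler_sum => a _; rewrite mulrC.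
Qed.

Lemma pair_value_le_bob x y y' :
  pair_value x y <= \sum_a \sum_b q x y' a b * (V a (best_bob x y a) x y)%:R.
Proof.
apply: (@le_trans _ _ (\sum_a \sum_b (V a (best_bob x y a) x y)%:R * q x y a b)).
  by apply: ler_sum => a _; apply: ler_sum => b _; rewrite ler_wpM2r ?best_bobP.
apply: ler_sum => a _; rewrite -mulr_sumr (alice_marginal x y y') mulr_sumr.
by apply: ler_sum => b _; rewrite mulrC.
Qed.

Lemma sum_bool_split (X : bool) (F : bool -> R) : \sum_x F x = F X + F (~~ X).
Proof. by case: X; rewrite big_bool //= addrC. Qed.

Variables X Y : bool.
Hypothesis piXY : pi X Y = 0.

(* For answers (a, b) to the other pair (~X, ~Y), the deterministic strategy
   answering a, b there and best responses on the two mixed pairs. *)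
Definition glue_alice a b : {ffun bool -> SA} :=
  [ffun x => if x == X then best_alice X (~~ Y) b else a].
Definition glue_bob a b : {ffun bool -> SB} :=
  [ffun y => if y == Y then best_bob (~~ X) Y a else b].

Lemma cval_glue a b : cval pi V (glue_alice a b) (glue_bob a b) =
  pi X (~~ Y) * (V (best_alice X (~~ Y) b) b X (~~ Y))%:R
  + pi (~~ X) Y * (V a (best_bob (~~ X) Y a) (~~ X) Y)%:R
  + pi (~~ X) (~~ Y) * (V a b (~~ X) (~~ Y))%:R.
Proof.
have negF (Z : bool) : (~~ Z == Z) = false by case: Z.
rewrite /cval (sum_bool_split X) !(sum_bool_split Y) !ffunE !eqxx !negF piXY.
by rewrite mul0r add0r addrA.
Qed.

(* A no-signaling correlation does no better than the classical value: its
   value is an average, with weights q (~X) (~Y) a b, of glued strategies. *)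
Lemma corr_value_le_omega : corr_value <= omega pi V.
Proof.
pose w a b := q (~~ X) (~~ Y) a b.
pose avg (F : SA -> SB -> R) := \sum_a \sum_b w a b * F a b.
have avg_glue : avg (fun a b => cval pi V (glue_alice a b) (glue_bob a b)) =
    pi X (~~ Y) * avg (fun a b => (V (best_alice X (~~ Y) b) b X (~~ Y))%:R)
  + pi (~~ X) Y * avg (fun a b => (V a (best_bob (~~ X) Y a) (~~ X) Y)%:R)
  + pi (~~ X) (~~ Y) * avg (fun a b => (V a b (~~ X) (~~ Y))%:R).
  rewrite /avg !mulr_sumr -!big_split; apply: eq_bigr => a _.
  rewrite !mulr_sumr -!big_split; apply: eq_bigr => b _ /=.
  by rewrite cval_glue; ring.
have value_split : corr_value = pi X (~~ Y) * pair_value X (~~ Y)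
    + pi (~~ X) Y * pair_value (~~ X) Y + pi (~~ X) (~~ Y) * pair_value (~~ X) (~~ Y).
  by rewrite /corr_value (sum_bool_split X) !(sum_bool_split Y) piXY mul0r add0r addrA.
have diag_value : pair_value (~~ X) (~~ Y) = avg (fun a b => (V a b (~~ X) (~~ Y))%:R).
  by apply: eq_bigr => a _; apply: eq_bigr => b _; rewrite mulrC.
apply: (@le_trans _ _ (avg (fun a b => cval pi V (glue_alice a b) (glue_bob a b)))).
  rewrite value_split avg_glue diag_value lerD2r.
  by rewrite lerD ?ler_wpM2l ?pair_value_le_alice ?pair_value_le_bob.
apply: (@le_trans _ _ (avg (fun _ _ => omega pi V))).
  apply: ler_sum => a _; apply: ler_sum => b _; rewrite ler_wpM2l ?q_ge0 //.
  by case: (omega_max V pi_ge0 (glue_alice a b) (glue_bob a b)).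
by rewrite /avg; under eq_bigr do rewrite -mulr_suml; rewrite -mulr_suml q_normalized mul1r.
Qed.

End NonSignaling.

Section QuantumStrategies.
Variables (R : numClosedFieldType) (SA SB : finType).
Variables (pi : bool -> bool -> R) (V : SA -> SB -> bool -> bool -> bool).

Lemma qval_le_omega (a0 : SA) (b0 : SB) (X Y : bool) (dA dB : nat)
    (psi : 'M[R]_(dA, dB)) (PA : bool -> SA -> 'M[R]_dA) (PB : bool -> SB -> 'M[R]_dB) :
  (forall x y, 0 <= pi x y) -> pi X Y = 0 ->
  is_state psi -> is_povm PA -> is_povm PB -> qval pi V psi PA PB <= omega pi V.
Proof.
move=> pi_ge0 piXY Hs [PA_psd PA_sum] [PB_psd PB_sum].
pose q x y a b := qcorr psi (PA x a) (PB y b).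
apply: (corr_value_le_omega a0 b0 V pi_ge0 (q := q) _ _ _ _ piXY).
- by move=> x y a b; apply: qcorr_ge0.
- move=> x y; under eq_bigr do rewrite qcorr_sumr PB_sum.
  by rewrite qcorr_suml PA_sum qcorr_id.
- by move=> x y y' a; rewrite !qcorr_sumr !PB_sum.
- by move=> x x' y b; rewrite !qcorr_suml !PA_sum.
Qed.

Lemma sum_delta (S : finType) (c : S) (F : S -> R) : \sum_a F a * (c == a)%:R = F c.
Proof.
rewrite (bigD1 c) //= eqxx mulr1 big1 ?addr0 // => a ac.
by rewrite eq_sym (negbTE ac) mulr0.
Qed.

Definition det_povm (S : finType) (g : {ffun bool -> S}) (x : bool) (a : S) : 'M[R]_1 :=
  ((g x == a)%:R)%:M.

Lemma det_povmP (S : finType) (g : {ffun bool -> S}) : is_povm (det_povm g).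
Proof.
split=> [x a v | x].
  rewrite /psd !big_ord1 mxE eqxx mulr1n mulrAC.
  by apply: mulr_ge0; [rewrite mulrC mul_conjC_ge0 | rewrite ler0n].
apply/matrixP => i j; rewrite summxE mxE; under eq_bigr do rewrite mxE.
rewrite sumrMnl; congr (_ *+ _).
by under eq_bigr do rewrite -[(_ == _)%:R]mul1r; rewrite sum_delta.
Qed.

Lemma cval_quantum alpha beta : quantum_values pi V (cval pi V alpha beta).
Proof.
exists 1%N, 1%N, (const_mx 1), (det_povm alpha), (det_povm beta).
split; [by rewrite /is_state !big_ord1 mxE normr1 expr1n | exact: det_povmP
  | exact: det_povmP | ].
apply: eq_bigr => x _; apply: eq_bigr => y _; congr (_ * _).
rewrite -(sum_delta (alpha x) (fun a => (V a (beta y) x y)%:R)).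
apply: eq_bigr => a _; rewrite -(sum_delta (beta y) (fun b => (V a b x y)%:R)) mulr_suml.
apply: eq_bigr => b _.
rewrite /qcorr !big_ord1 !mxE eqxx !mulr1n rmorph1 mul1r mulr1; ring.
Qed.

End QuantumStrategies.

Unset Implicit Arguments.

Theorem mainTheorem8 (R : numClosedFieldType) (SA SB : finType)
  (pi : bool -> bool -> R) (V : SA -> SB -> bool -> bool -> bool) :
  (0 < #|SA|)%N -> (0 < #|SB|)%N ->
  is_distribution pi ->
  (exists X Y : bool, pi X Y = 0) ->
  omega_star_eq_omega pi V.
Proof.
move=> /card_gt0P [a0 _] /card_gt0P [b0 _] [pi_ge0 _] [X [Y piXY]].
have [_ [alpha [beta omega_val]]] := omega_max V pi_ge0 [ffun=> a0] [ffun=> b0].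
split=> [v [dA [dB [psi [PA [PB [Hs HA HB ->]]]]]] | u ub].
  exact: (qval_le_omega V a0 b0 pi_ge0 piXY Hs HA HB).
by rewrite omega_val; apply/ub/cval_quantum.
Qed.
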